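(* Let $n\geq 1$ and $k\geq 1$ be integers with $k\not\equiv 1 \pmod 3$. Then $\gcd(C_{k,n},C_{k,n+1})=1$.
   Context: For an integer $k\geq 1$, the generalized balancing-Lucas numbers are defined by $C_{k,0}=1$, $C_{k,1}=3$ and $C_{k,n}=3kC_{k,n-1}+(1-k)C_{k,n-2}$ for $n\geq 2$. *)

From mathcomp Require Import all_boot all_order all_algebra.
Set Implicit Arguments. Unset Strict Implicit. Unset Printing Implicit Defensive.
Import GRing.Theory Num.Theory.
Local Open Scope ring_scope.

(* Generalized balancing-Lucas numbers, as integers:
   C_{k,0} = 1, C_{k,1} = 3, C_{k,n} = 3k C_{k,n-1} + (1-k) C_{k,n-2}. *)
Fixpoint balC_pair (k : nat) (n : nat) : int * int :=
  match n with
  | 0 => (1, 3)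
  | n'.+1 => let p := balC_pair k n' in
             (p.2, 3 * k%:Z * p.2 + (1 - k%:Z) * p.1)
  end.

Definition balC (k n : nat) : int := (balC_pair k n).1.

From mathcomp Require Import all_boot all_order all_algebra.
From mathcomp Require Import ring.
Import GRing.Theory Num.Theory.
Local Open Scope ring_scope.

(* Modulo 1 - k the recurrence degenerates to C_{n+1} = 3 C_n, so C_n is
   congruent to 3^n, which is prime to 1 - k as soon as 3 does not divide
   1 - k.  Since gcd(C_{n+1}, C_{n+2}) = gcd(C_{n+1}, (1 - k) C_n), induction
   on n then gives coprimality of consecutive terms. *)

Lemma balC0 k : balC k 0 = 1. Proof. by []. Qed.

Lemma balC1 k : balC k 1 = 3. Proof. by []. Qed.

Lemma balCSS k n :
  balC k n.+2 = 3 * k%:Z * balC k n.+1 + (1 - k%:Z) * balC k n.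
Proof. by []. Qed.

Lemma dvdz_1subk_balCS k n : (1 - k%:Z %| balC k n.+1 - 3 * balC k n)%Z.
Proof.
case: n => [|n]; first by rewrite balC0 balC1 mulr1 subrr dvdz0.
apply/dvdzP; exists (balC k n - 3 * balC k n.+1).
by rewrite balCSS; ring.
Qed.

Lemma balC_mod_1subk k n : (balC k n = 3 ^+ n %[mod 1 - k%:Z])%Z.
Proof.
elim: n => [|n IHn]; first by rewrite balC0 expr0.
have /eqP -> : (balC k n.+1 == 3 * balC k n %[mod 1 - k%:Z])%Z.
  by rewrite eqz_mod_dvd dvdz_1subk_balCS.
by rewrite -modzMmr IHn modzMmr exprS.
Qed.

Lemma coprimez_3_1subk k : (k %% 3 != 1)%N -> coprimez 3 (1 - k%:Z).
Proof.
move=> k_mod3; rewrite /coprimez.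
have -> : 1 - k%:Z = - (k %/ 3)%:Z * 3 + (1 - (k %% 3)%:Z).
  rewrite {1}(divn_eq k 3) PoszD PoszM; ring.
rewrite gcdzMDl.
by case: (k %% 3)%N k_mod3 (ltn_pmod k (isT : 0 < 3)%N) => [|[|[|r]]].
Qed.

Lemma coprimez_balC_1subk k n :
  (k %% 3 != 1)%N -> coprimez (balC k n) (1 - k%:Z).
Proof.
move=> k_mod3; rewrite /coprimez -gcdz_modl balC_mod_1subk gcdz_modl.
exact/coprimezXl/coprimez_3_1subk.
Qed.

Lemma coprimez_balCS k n :
  (k %% 3 != 1)%N -> coprimez (balC k n) (balC k n.+1).
Proof.
move=> k_mod3; elim: n => [|n IHn]; first by [].
rewrite /coprimez balCSS gcdzMDl Gauss_gcdzl.
  exact: coprimez_balC_1subk.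
by rewrite /coprimez gcdzC.
Qed.

Local Close Scope ring_scope.

Theorem mainTheorem12 (k n : nat) :
  (1 <= n)%N -> (1 <= k)%N -> (k %% 3 != 1)%N ->
  gcdz (balC k n) (balC k n.+1) = 1.
Proof. by move=> _ _ k_mod3; apply/eqP/coprimez_balCS. Qed.
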